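(* If \(A\subseteq\operatorname{Homeo}_+(I)\) is a geometrically fast set of positive bump functions, then there is a geometrically fast set \(B\subseteq\operatorname{Homeo}_+(I)\) of positive bumps with \(A\subseteq B\) such that \(B\) has no isolated elements. Moreover, if \(A\) is finite, then \(B\) can be taken to be finite.
   Context: \(I=[0,1]\), homeomorphisms act on the right. Support \(\operatorname{supt}(f)=\{t: tf\neq t\}\). A left (right) transition point of \(f\) is \(t\notin\operatorname{supt}(f)\) such that \((t,t+\epsilon)\) (resp. \((t-\epsilon,t)\)) meets \(\operatorname{supt}(f)\) for every \(\epsilon>0\); a transition point of a set is one of some element. A positive bump is an element of \(\operatorname{Homeo}_+(I)\) whose support is a single open interval on which \(ta>t\). A set \(A\) of bumps is geometrically proper if no point is a left transition point of two distinct elements, nor a right transition point of two distinct elements. A marking assigns to each \(a\in A\) a marker \(t\in\operatorname{supt}(a)\); for \(a\) with support \((x,y)\) its feet are \(\operatorname{src}(a)=(x,t)\) and \(\operatorname{dest}(a)=[ta,y)\). \(A\) is geometrically fast if it is geometrically proper and has a marking for which all feet of all elements are pairwise disjoint. An element of \(A\) is isolated (in \(A\)) if its support contains no transition point of \(A\). *)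

From Stdlib Require Import Reals List.
Open Scope R_scope.

Definition inI (t : R) : Prop := 0 <= t <= 1.

(* Elements of Homeo_+(I), encoded as maps R -> R which are the identity
   outside [0,1] (so distinct homeomorphisms of I correspond to distinct
   functions), fix 0 and 1, are strictly increasing and continuous.
   (A continuous strictly increasing self-map of [0,1] fixing 0 and 1 is an
   orientation-preserving homeomorphism, and conversely.)  The action is on
   the right: t.f is written [f t]. *)
Definition homeo_plus (f : R -> R) : Prop :=
  (forall t, ~ inI t -> f t = t) /\
  f 0 = 0 /\ f 1 = 1 /\
  (forall s t, inI s -> inI t -> s < t -> f s < f t) /\
  continuity f.

Definition supt (f : R -> R) (t : R) : Prop := f t <> t.

Definition left_tp (f : R -> R) (t : R) : Prop :=
  ~ supt f t /\
  forall eps, 0 < eps -> exists s, t < s < t + eps /\ supt f s.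

Definition right_tp (f : R -> R) (t : R) : Prop :=
  ~ supt f t /\
  forall eps, 0 < eps -> exists s, t - eps < s < t /\ supt f s.

Definition transition_point (A : (R -> R) -> Prop) (t : R) : Prop :=
  exists f, A f /\ (left_tp f t \/ right_tp f t).

Definition positive_bump (f : R -> R) : Prop :=
  homeo_plus f /\
  exists x y, x < y /\ (forall t, supt f t <-> x < t < y) /\
              (forall t, x < t < y -> f t > t).

Definition geom_proper (A : (R -> R) -> Prop) : Prop :=
  (forall f g t, A f -> A g -> left_tp f t -> left_tp g t -> f = g) /\
  (forall f g t, A f -> A g -> right_tp f t -> right_tp g t -> f = g).

Definition src (a : R -> R) (m : R) (s : R) : Prop :=
  exists x y, (forall t, supt a t <-> x < t < y) /\ x < s < m.

Definition dest (a : R -> R) (m : R) (s : R) : Prop :=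
  exists x y, (forall t, supt a t <-> x < t < y) /\ a m <= s < y.

Definition foot (a : R -> R) (m : R) (k : bool) : R -> Prop :=
  if k then src a m else dest a m.

Definition geom_fast (A : (R -> R) -> Prop) : Prop :=
  geom_proper A /\
  exists mk : (R -> R) -> R,
    (forall a, A a -> supt a (mk a)) /\
    (forall a b (k k' : bool) s, A a -> A b -> (a, k) <> (b, k') ->
        foot a (mk a) k s -> foot b (mk b) k' s -> False).

Definition isolated (A : (R -> R) -> Prop) (a : R -> R) : Prop :=
  A a /\ forall t, supt a t -> ~ transition_point A t.

Definition finite_set (A : (R -> R) -> Prop) : Prop :=
  exists l : list (R -> R), forall f, A f -> In f l.

From Stdlib Require Import Reals Lra List Classical ClassicalEpsilon FunctionalExtensionality.
Open Scope R_scope.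

(* Let a0 be isolated, with marker m and gap (m, a0 m) = (m, m + 10u).  Inside
   the gap place the bumps b1, b3 with supports (m + u, m + 6u) and
   (m + 3u, m + 8u) and markers m + 2u, m + 4u.  Their four feet are disjoint
   subintervals of the gap, and the gap meets no foot of A, so the marking stays
   fast.  Their transition points lie in supt a0, which contains no transition
   point of A, and the supports of distinct isolated elements are disjoint, so
   properness is preserved.  Finally a0 contains the left end of b1, b1 the left
   end of b3, and b3 the right end of b1, so nothing is isolated any more. *)

Lemma Rmax_abs a b : Rmax a b = (a + b + Rabs (a - b)) / 2.
Proof. unfold Rmax; destruct Rle_dec; [rewrite Rabs_left1 | rewrite Rabs_right]; lra. Qed.

Lemma Rmin_abs a b : Rmin a b = (a + b - Rabs (a - b)) / 2.
Proof. unfold Rmin; destruct Rle_dec; [rewrite Rabs_left1 | rewrite Rabs_right]; lra. Qed.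

Lemma continuity_Rmax f g :
  continuity f -> continuity g -> continuity (fun t => Rmax (f t) (g t)).
Proof.
  intros Hf Hg.
  replace (fun t => Rmax (f t) (g t)) with (fun t => (f t + g t + Rabs (f t - g t)) / 2)
    by (extensionality t; symmetry; apply Rmax_abs).
  reg.
Qed.

Lemma continuity_Rmin f g :
  continuity f -> continuity g -> continuity (fun t => Rmin (f t) (g t)).
Proof.
  intros Hf Hg.
  replace (fun t => Rmin (f t) (g t)) with (fun t => (f t + g t - Rabs (f t - g t)) / 2)
    by (extensionality t; symmetry; apply Rmin_abs).
  reg.
Qed.

(* The piecewise linear map through (p, p), (p + d, p + 4d) and (p + 5d, p + 5d). *)
Definition pl_bump (p d t : R) : R :=
  Rmax t (Rmin (p + 4 * (t - p)) (p + 4 * d + (t - p - d) / 4)).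

Ltac pl_bump_cases := intros; unfold pl_bump, Rmax, Rmin; repeat destruct Rle_dec; lra.

Lemma pl_bump_fix p d t : 0 < d -> t <= p \/ p + 5 * d <= t -> pl_bump p d t = t.
Proof. pl_bump_cases. Qed.

Lemma pl_bump_gt p d t : 0 < d -> p < t < p + 5 * d -> t < pl_bump p d t.
Proof. pl_bump_cases. Qed.

Lemma pl_bump_marker p d : 0 < d -> pl_bump p d (p + d) = p + 4 * d.
Proof. pl_bump_cases. Qed.

Lemma pl_bump_increasing p d s t : 0 < d -> s < t -> pl_bump p d s < pl_bump p d t.
Proof. pl_bump_cases. Qed.

Lemma continuity_pl_bump p d : continuity (pl_bump p d).
Proof. unfold pl_bump. apply continuity_Rmax; [| apply continuity_Rmin]; reg. Qed.

Definition supp_is (f : R -> R) (x y : R) : Prop := forall t, supt f t <-> x < t < y.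

Lemma supp_is_pl_bump p d : 0 < d -> supp_is (pl_bump p d) p (p + 5 * d).
Proof.
  intros Hd t; unfold supt; split; intros Ht.
  - destruct (Rle_dec t p), (Rle_dec (p + 5 * d) t);
      try (exfalso; apply Ht, pl_bump_fix; lra); lra.
  - pose proof (pl_bump_gt p d t Hd Ht); lra.
Qed.

Lemma positive_bump_pl_bump p d :
  0 < d -> 0 <= p -> p + 5 * d <= 1 -> positive_bump (pl_bump p d).
Proof.
  intros Hd Hp Hq. split.
  - split; [| split; [| split; [| split]]].
    + intros t Ht. apply pl_bump_fix; [lra |].
      destruct (Rle_dec t p); [left; lra | right].
      apply Rnot_lt_le; intros Hlt; apply Ht; unfold inI; lra.
    + apply pl_bump_fix; lra.
    + apply pl_bump_fix; lra.
    + intros s t _ _; apply pl_bump_increasing, Hd.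
    + apply continuity_pl_bump.
  - exists p, (p + 5 * d). split; [lra | split].
    + apply supp_is_pl_bump, Hd.
    + intros t Ht; apply pl_bump_gt; auto.
Qed.

Lemma interval_sub_bounds x y x' y' :
  x < y -> (forall t, x < t < y -> x' <= t <= y') -> x' <= x /\ y <= y'.
Proof.
  intros Hxy H. split; apply Rnot_lt_le; intros Hc.
  - set (t := (x + Rmin x' y) / 2).
    assert (Ht : x < t < y /\ t < x') by (unfold t, Rmin; destruct Rle_dec; lra).
    specialize (H t (proj1 Ht)); lra.
  - set (t := (Rmax y' x + y) / 2).
    assert (Ht : x < t < y /\ y' < t) by (unfold t, Rmax; destruct Rle_dec; lra).
    specialize (H t (proj1 Ht)); lra.
Qed.

Lemma interval_eq x y x' y' :
  x < y -> (forall t, x < t < y <-> x' < t < y') -> x = x' /\ y = y'.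
Proof.
  intros Hxy H.
  assert (Hxy' : x' < y') by (destruct (H ((x + y) / 2)) as [Hmid _]; specialize (Hmid ltac:(lra)); lra).
  destruct (interval_sub_bounds x y x' y') as [Hx Hy]; [exact Hxy | intros t Ht; apply H in Ht; lra |].
  destruct (interval_sub_bounds x' y' x y) as [Hx' Hy']; [exact Hxy' | intros t Ht; apply H in Ht; lra |].
  lra.
Qed.

Lemma supp_is_unique f x y x' y' :
  x < y -> supp_is f x y -> supp_is f x' y' -> x = x' /\ y = y'.
Proof. intros Hxy H H'. apply interval_eq; auto. intros t; rewrite <- (H t); apply H'. Qed.

Lemma left_tp_iff f x y t : x < y -> supp_is f x y -> (left_tp f t <-> t = x).
Proof.
  intros Hxy H. split.
  - intros [Hn He]. rewrite (H t) in Hn.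
    destruct (Rtotal_order t x) as [Hlt | [Heq | Hgt]]; auto; exfalso.
    + destruct (He (x - t)) as [s [Hs Hst]]; [lra |]. apply H in Hst; lra.
    + assert (y <= t) by (apply Rnot_lt_le; intro; apply Hn; lra).
      destruct (He 1) as [s [Hs Hst]]; [lra |]. apply H in Hst; lra.
  - intros ->. split.
    + intros Hx; apply H in Hx; lra.
    + intros eps Heps. exists (x + Rmin eps (y - x) / 2).
      split; [| apply H]; unfold Rmin; destruct Rle_dec; lra.
Qed.

Lemma right_tp_iff f x y t : x < y -> supp_is f x y -> (right_tp f t <-> t = y).
Proof.
  intros Hxy H. split.
  - intros [Hn He]. rewrite (H t) in Hn.
    destruct (Rtotal_order t y) as [Hlt | [Heq | Hgt]]; auto; exfalso.
    + assert (t <= x) by (apply Rnot_lt_le; intro; apply Hn; lra).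
      destruct (He 1) as [s [Hs Hst]]; [lra |]. apply H in Hst; lra.
    + destruct (He (t - y)) as [s [Hs Hst]]; [lra |]. apply H in Hst; lra.
  - intros ->. split.
    + intros Hy; apply H in Hy; lra.
    + intros eps Heps. exists (y - Rmin eps (y - x) / 2).
      split; [| apply H]; unfold Rmin; destruct Rle_dec; lra.
Qed.

Lemma src_iff f x y m s : x < y -> supp_is f x y -> (src f m s <-> x < s < m).
Proof.
  intros Hxy H. split.
  - intros [x' [y' [H' Hs]]]. destruct (supp_is_unique f x y x' y' Hxy H H') as [<- _]. exact Hs.
  - intros Hs. exists x, y. auto.
Qed.

Lemma dest_iff f x y m s : x < y -> supp_is f x y -> (dest f m s <-> f m <= s < y).
Proof.
  intros Hxy H. split.
  - intros [x' [y' [H' Hs]]]. destruct (supp_is_unique f x y x' y' Hxy H H') as [_ <-]. exact Hs.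
  - intros Hs. exists x, y. auto.
Qed.

Lemma positive_bump_supp a : positive_bump a -> exists x y, x < y /\ supp_is a x y.
Proof. intros [_ [x [y [Hxy [H _]]]]]. exists x, y. auto. Qed.

Lemma positive_bump_supp_bounds a x y :
  positive_bump a -> x < y -> supp_is a x y -> 0 <= x /\ y <= 1.
Proof.
  intros [[Hout _] _] Hxy H. apply interval_sub_bounds; auto.
  intros t Ht. apply NNPP; intros Hn. apply (proj2 (H t) Ht), Hout, Hn.
Qed.

Lemma positive_bump_maps_supp a x y u :
  positive_bump a -> supp_is a x y -> x < u < y -> u < a u < y.
Proof.
  intros Ha H Hu.
  destruct (positive_bump_supp_bounds a x y Ha) as [H0 H1]; [lra | exact H |].
  destruct Ha as [[_ [_ [_ [Hinc _]]]] [x' [y' [Hxy' [H' Hpos]]]]].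
  destruct (supp_is_unique a x' y' x y Hxy' H' H) as [<- <-].
  assert (Hfix : a y' = y') by (apply NNPP; intros Hc; apply H in Hc; lra).
  split; [apply Hpos, Hu |].
  rewrite <- Hfix. apply Hinc; unfold inI; lra.
Qed.

Lemma geom_proper_union (P Q : (R -> R) -> Prop) :
  geom_proper P -> geom_proper Q ->
  (forall t, transition_point P t -> transition_point Q t -> False) ->
  geom_proper (fun f => P f \/ Q f).
Proof.
  intros [HPl HPr] [HQl HQr] Hdisj.
  split; intros f g t [Pf | Qf] [Pg | Qg] Hf Hg; eauto;
    exfalso; apply (Hdisj t); eexists; split; eauto.
Qed.

Lemma geom_fast_of_markers (P : (R -> R) -> Prop) (M : (R -> R) -> R -> Prop) :
  geom_proper P ->
  (forall f, P f -> exists m, M f m) ->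
  (forall f m, P f -> M f m -> supt f m) ->
  (forall a b (k k' : bool) ma mb s, P a -> P b -> M a ma -> M b mb ->
     (a, k) <> (b, k') -> foot a ma k s -> foot b mb k' s -> False) ->
  geom_fast P.
Proof.
  intros Hprop Hex Hsupt Hfeet. split; [exact Hprop |].
  destruct (choice (fun f m => P f -> M f m)) as [mk Hmk].
  { intros f. destruct (classic (P f)) as [Pf | nPf].
    - destruct (Hex f Pf) as [m Hm]. exists m; auto.
    - exists 0; tauto. }
  exists mk. split; eauto.
Qed.

Section Extension.

Variable A : (R -> R) -> Prop.
Variable mk : (R -> R) -> R.
Hypothesis A_bumps : forall a, A a -> positive_bump a.
Hypothesis A_proper : geom_proper A.
Hypothesis A_marked : forall a, A a -> supt a (mk a).
Hypothesis A_feet_disjoint : forall a b (k k' : bool) s, A a -> A b -> (a, k) <> (b, k') ->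
  foot a (mk a) k s -> foot b (mk b) k' s -> False.

Lemma marked_supp a :
  A a -> exists x y, supp_is a x y /\ 0 <= x < mk a /\ mk a < a (mk a) < y /\ y <= 1.
Proof.
  intros Ha. destruct (positive_bump_supp a (A_bumps a Ha)) as [x [y [Hxy H]]].
  pose proof (A_marked a Ha) as Hm. apply H in Hm.
  destruct (positive_bump_supp_bounds a x y (A_bumps a Ha) Hxy H).
  pose proof (positive_bump_maps_supp a x y (mk a) (A_bumps a Ha) H Hm).
  exists x, y. split; [exact H | lra].
Qed.

Lemma gap_in_supp a s : A a -> mk a <= s <= a (mk a) -> supt a s.
Proof. intros Ha Hs. destruct (marked_supp a Ha) as [x [y [H B]]]. apply H. lra. Qed.

(* The endpoints of supt a are transition points of A, so they cannot lie in supt a0. *)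
Lemma isolated_supp_within a a0 xa ya x0 y0 t :
  A a -> isolated A a0 -> supp_is a xa ya -> supp_is a0 x0 y0 ->
  xa < t < ya -> x0 < t < y0 -> xa <= x0 /\ y0 <= ya.
Proof.
  intros Ha [_ Hiso] H H0 Ht Ht0. split; apply Rnot_lt_le; intros Hc.
  - apply (Hiso xa); [apply H0; lra |].
    exists a. split; [exact Ha | left]. apply (left_tp_iff a xa ya); auto; lra.
  - apply (Hiso ya); [apply H0; lra |].
    exists a. split; [exact Ha | right]. apply (right_tp_iff a xa ya); auto; lra.
Qed.

Lemma isolated_eq a0 a1 t : isolated A a0 -> isolated A a1 -> supt a0 t -> supt a1 t -> a0 = a1.
Proof.
  intros I0 I1 S0 S1.
  destruct (positive_bump_supp a0 (A_bumps a0 (proj1 I0))) as [x0 [y0 [Hxy0 H0]]].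
  destruct (positive_bump_supp a1 (A_bumps a1 (proj1 I1))) as [x1 [y1 [Hxy1 H1]]].
  apply H0 in S0. apply H1 in S1.
  destruct (isolated_supp_within a1 a0 x1 y1 x0 y0 t (proj1 I1) I0 H1 H0 S1 S0).
  destruct (isolated_supp_within a0 a1 x0 y0 x1 y1 t (proj1 I0) I1 H0 H1 S0 S1).
  apply (proj1 A_proper a0 a1 x0 (proj1 I0) (proj1 I1)).
  - apply (left_tp_iff a0 x0 y0); auto.
  - apply (left_tp_iff a1 x1 y1); auto; lra.
Qed.

(* Since supt a0 lies inside supt a, a foot of a reaching into the gap of a0
   contains the outer end of the foot of a0 of the same kind. *)
Lemma feet_avoid_gap a a0 k s :
  A a -> isolated A a0 -> foot a (mk a) k s -> mk a0 < s < a0 (mk a0) -> False.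
Proof.
  intros Ha I0 Hf Hs.
  destruct (marked_supp a0 (proj1 I0)) as [x0 [y0 [H0 B0]]].
  destruct (marked_supp a Ha) as [x [y [H B]]].
  assert (Hk : if k then x < s < mk a else a (mk a) <= s < y).
  { destruct k; simpl in Hf; [apply (src_iff a x y) in Hf | apply (dest_iff a x y) in Hf];
      auto; lra. }
  destruct (classic (a = a0)) as [<- | Hne]; [destruct k; lra |].
  destruct (isolated_supp_within a a0 x y x0 y0 s Ha I0 H H0) as [Hx Hy];
    [destruct k; lra | lra |].
  assert (Hne' : forall k : bool, (a, k) <> (a0, k)) by (intros k' E; apply Hne; congruence).
  destruct k.
  - apply (A_feet_disjoint a a0 true true ((x0 + mk a0) / 2) Ha (proj1 I0) (Hne' true));
      simpl; [apply (src_iff a x y) | apply (src_iff a0 x0 y0)]; auto; lra.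
  - apply (A_feet_disjoint a a0 false false ((a0 (mk a0) + y0) / 2) Ha (proj1 I0) (Hne' false));
      simpl; [apply (dest_iff a x y) | apply (dest_iff a0 x0 y0)]; auto; lra.
Qed.

Definition gap_unit (a : R -> R) : R := (a (mk a) - mk a) / 10.

Definition new_bump (a : R -> R) (j : R) : R -> R :=
  pl_bump (mk a + j * gap_unit a) (gap_unit a).

Lemma gap_unit_marker a : a (mk a) = mk a + 10 * gap_unit a.
Proof. unfold gap_unit; field. Qed.

Lemma gap_unit_pos a : A a -> 0 < gap_unit a.
Proof. intros Ha. destruct (marked_supp a Ha) as [x [y [_ B]]]. unfold gap_unit; lra. Qed.

Lemma supp_is_new_bump a j :
  A a -> supp_is (new_bump a j) (mk a + j * gap_unit a) (mk a + (j + 5) * gap_unit a).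
Proof.
  intros Ha. replace (mk a + (j + 5) * gap_unit a) with (mk a + j * gap_unit a + 5 * gap_unit a)
    by ring.
  apply supp_is_pl_bump, gap_unit_pos, Ha.
Qed.

Lemma positive_bump_new_bump a j : A a -> 0 <= j <= 5 -> positive_bump (new_bump a j).
Proof.
  intros Ha Hj. destruct (marked_supp a Ha) as [x [y [_ B]]].
  pose proof (gap_unit_pos a Ha). pose proof (gap_unit_marker a).
  apply positive_bump_pl_bump; nra.
Qed.

Lemma new_bump_left_tp a j t : A a -> (left_tp (new_bump a j) t <-> t = mk a + j * gap_unit a).
Proof.
  intros Ha. pose proof (gap_unit_pos a Ha).
  apply (left_tp_iff _ (mk a + j * gap_unit a) (mk a + (j + 5) * gap_unit a));
    [nra | exact (supp_is_new_bump a j Ha)].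
Qed.

Lemma new_bump_right_tp a j t :
  A a -> (right_tp (new_bump a j) t <-> t = mk a + (j + 5) * gap_unit a).
Proof.
  intros Ha. pose proof (gap_unit_pos a Ha).
  apply (right_tp_iff _ (mk a + j * gap_unit a));
    [nra | exact (supp_is_new_bump a j Ha)].
Qed.

Lemma new_bump_foot a j k s :
  A a -> foot (new_bump a j) (mk a + (j + 1) * gap_unit a) k s ->
  if k then mk a + j * gap_unit a < s < mk a + (j + 1) * gap_unit a
  else mk a + (j + 4) * gap_unit a <= s < mk a + (j + 5) * gap_unit a.
Proof.
  intros Ha Hf. pose proof (gap_unit_pos a Ha).
  assert (Hlt : mk a + j * gap_unit a < mk a + (j + 5) * gap_unit a) by nra.
  destruct k; simpl in Hf.
  - exact (proj1 (src_iff _ _ _ _ _ Hlt (supp_is_new_bump a j Ha)) Hf).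
  - apply (dest_iff _ _ _ _ _ Hlt (supp_is_new_bump a j Ha)) in Hf.
    unfold new_bump at 1 in Hf.
    replace (mk a + (j + 1) * gap_unit a) with (mk a + j * gap_unit a + gap_unit a) in Hf by ring.
    rewrite pl_bump_marker in Hf by exact H. nra.
Qed.

Lemma new_bump_foot_in_gap a j k s :
  A a -> (j = 1 \/ j = 3) -> foot (new_bump a j) (mk a + (j + 1) * gap_unit a) k s ->
  mk a < s < a (mk a).
Proof.
  intros Ha Hj Hf. apply new_bump_foot in Hf; [| exact Ha].
  pose proof (gap_unit_pos a Ha). rewrite gap_unit_marker.
  destruct Hj as [-> | ->], k; lra.
Qed.

Definition added (f : R -> R) : Prop :=
  exists a j, isolated A a /\ (j = 1 \/ j = 3) /\ f = new_bump a j.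

Definition extension (f : R -> R) : Prop := A f \/ added f.

Definition extension_marker (f : R -> R) (m : R) : Prop :=
  (A f /\ m = mk f) \/
  exists a j, isolated A a /\ (j = 1 \/ j = 3) /\ f = new_bump a j /\
              m = mk a + (j + 1) * gap_unit a.

Lemma added_tp_supt a j t :
  A a -> (j = 1 \/ j = 3) -> (left_tp (new_bump a j) t \/ right_tp (new_bump a j) t) -> supt a t.
Proof.
  intros Ha Hj Ht. apply gap_in_supp; [exact Ha |].
  rewrite new_bump_left_tp, new_bump_right_tp in Ht by exact Ha.
  pose proof (gap_unit_pos a Ha). rewrite gap_unit_marker.
  destruct Hj as [-> | ->], Ht as [-> | ->]; lra.
Qed.

Lemma tp_A_added_disjoint t : transition_point A t -> transition_point added t -> False.
Proof.
  intros HA [f [[a [j [Ia [Hj ->]]]] Ht]].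
  apply (proj2 Ia t); [exact (added_tp_supt a j t (proj1 Ia) Hj Ht) | exact HA].
Qed.

Lemma added_proper : geom_proper added.
Proof.
  split; intros f g t [a [j [Ia [Hj ->]]]] [b [j' [Ib [Hj' ->]]]] Hf Hg;
    assert (a = b) as <- by (apply (isolated_eq a b t Ia Ib);
      [apply (added_tp_supt a j t (proj1 Ia) Hj) | apply (added_tp_supt b j' t (proj1 Ib) Hj')];
      auto);
    pose proof (gap_unit_pos a (proj1 Ia)).
  - rewrite new_bump_left_tp in Hf, Hg by apply Ia.
    destruct Hj as [-> | ->], Hj' as [-> | ->]; auto; lra.
  - rewrite new_bump_right_tp in Hf, Hg by apply Ia.
    destruct Hj as [-> | ->], Hj' as [-> | ->]; auto; lra.
Qed.

Lemma extension_feet_disjoint a b (k k' : bool) ma mb s :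
  extension_marker a ma -> extension_marker b mb ->
  (a, k) <> (b, k') -> foot a ma k s -> foot b mb k' s -> False.
Proof.
  intros [[Aa ->] | [a0 [j [I0 [Hj [-> ->]]]]]] [[Ab ->] | [b0 [j' [I1 [Hj' [-> ->]]]]]] Hne Fa Fb.
  - exact (A_feet_disjoint a b k k' s Aa Ab Hne Fa Fb).
  - exact (feet_avoid_gap a b0 k s Aa I1 Fa (new_bump_foot_in_gap b0 j' k' s (proj1 I1) Hj' Fb)).
  - exact (feet_avoid_gap b a0 k' s Ab I0 Fb (new_bump_foot_in_gap a0 j k s (proj1 I0) Hj Fa)).
  - pose proof (new_bump_foot_in_gap a0 j k s (proj1 I0) Hj Fa).
    pose proof (new_bump_foot_in_gap b0 j' k' s (proj1 I1) Hj' Fb).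
    assert (a0 = b0) by (apply (isolated_eq a0 b0 s I0 I1);
      [apply (gap_in_supp a0 s (proj1 I0)) | apply (gap_in_supp b0 s (proj1 I1))]; lra).
    subst b0. apply new_bump_foot in Fa, Fb; try exact (proj1 I0).
    pose proof (gap_unit_pos a0 (proj1 I0)).
    destruct Hj as [-> | ->], Hj' as [-> | ->], k, k'; try lra; apply Hne; reflexivity.
Qed.

Lemma extension_bumps b : extension b -> positive_bump b.
Proof.
  intros [Ab | [a [j [Ia [Hj ->]]]]]; [exact (A_bumps b Ab) |].
  apply positive_bump_new_bump; [apply Ia | destruct Hj; lra].
Qed.

Lemma extension_fast : geom_fast extension.
Proof.
  apply (geom_fast_of_markers extension extension_marker).
  - exact (geom_proper_union A added A_proper added_proper tp_A_added_disjoint).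
  - intros f [Af | [a [j [Ia [Hj ->]]]]].
    + exists (mk f). left; auto.
    + exists (mk a + (j + 1) * gap_unit a). right. exists a, j. auto.
  - intros f m _ [[Af ->] | [a [j [Ia [Hj [-> ->]]]]]]; [exact (A_marked f Af) |].
    apply supp_is_new_bump; [apply Ia |].
    pose proof (gap_unit_pos a (proj1 Ia)). nra.
  - intros a b k k' ma mb s _ _. apply extension_feet_disjoint.
Qed.

Lemma extension_not_isolated b : extension b -> ~ isolated extension b.
Proof.
  intros Bb [_ Hiso].
  assert (Hadded : forall f t, added f -> left_tp f t \/ right_tp f t -> supt b t -> False).
  { intros f t Hf Ht Hs. apply (Hiso t Hs). exists f. split; [right |]; auto. }
  destruct Bb as [Ab | [a [j [Ia [Hj ->]]]]].
  - destruct (classic (isolated A b)) as [Ib | nIb].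
    + pose proof (gap_unit_pos b Ab).
      apply (Hadded (new_bump b 1) (mk b + 1 * gap_unit b)).
      * exists b, 1. auto.
      * left. apply (new_bump_left_tp b 1 _ Ab). reflexivity.
      * apply gap_in_supp; [exact Ab |]. rewrite gap_unit_marker. lra.
    + apply nIb. split; [exact Ab |].
      intros t St [f [Af Tf]]. apply (Hiso t St). exists f. split; [left |]; auto.
  - pose proof (gap_unit_pos a (proj1 Ia)).
    destruct Hj as [-> | ->].
    + apply (Hadded (new_bump a 3) (mk a + 3 * gap_unit a)).
      * exists a, 3. auto.
      * left. apply (new_bump_left_tp a 3 _ (proj1 Ia)). reflexivity.
      * apply supp_is_new_bump; [apply Ia | lra].
    + apply (Hadded (new_bump a 1) (mk a + (1 + 5) * gap_unit a)).
      * exists a, 1. auto.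
      * right. apply (new_bump_right_tp a 1 _ (proj1 Ia)). reflexivity.
      * apply supp_is_new_bump; [apply Ia | lra].
Qed.

Lemma extension_finite : finite_set A -> finite_set extension.
Proof.
  intros [l Hl]. exists (l ++ flat_map (fun a => new_bump a 1 :: new_bump a 3 :: nil) l).
  intros f [Af | [a [j [Ia [Hj ->]]]]]; apply in_or_app; [left; auto | right].
  apply in_flat_map. exists a. split; [apply Hl, Ia | destruct Hj as [-> | ->]; simpl; auto].
Qed.

End Extension.

Theorem proposition3p1 :
  forall A : (R -> R) -> Prop,
    (forall a, A a -> positive_bump a) ->
    geom_fast A ->
    (exists B : (R -> R) -> Prop,
        (forall b, B b -> positive_bump b) /\ geom_fast B /\
        (forall a, A a -> B a) /\ (forall b, B b -> ~ isolated B b)) /\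
    (finite_set A ->
     exists B : (R -> R) -> Prop,
        (forall b, B b -> positive_bump b) /\ geom_fast B /\
        (forall a, A a -> B a) /\ (forall b, B b -> ~ isolated B b) /\
        finite_set B).
Proof.
  intros A HA [Hproper [mk [Hmk Hfeet]]].
  pose proof (extension_bumps A mk HA Hmk) as Hbumps.
  pose proof (extension_fast A mk HA Hproper Hmk Hfeet) as Hfast.
  pose proof (extension_not_isolated A mk HA Hmk) as Hnoniso.
  assert (Hsub : forall a, A a -> extension A mk a) by (intros a Ha; left; exact Ha).
  split.
  - exists (extension A mk). auto.
  - intros Hfin. exists (extension A mk).
    split; [| split; [| split; [| split]]]; auto.
    exact (extension_finite A mk Hfin).
Qed.
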